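(* The system \[ \frac{dR}{dZ} = -\tan\theta+\frac{R}{2Z},\qquad \frac{d\theta}{dZ} = (n-1)\Bigl(\frac{1}{\cos\theta}-\frac{1}{R}\Bigr),\qquad Z>0,\ R>0,\ \theta\in\bigl(-\tfrac{\pi}{2},\tfrac{\pi}{2}\bigr), \] admits a unique formal solution of the form \[ R(Z)=\sum_{k\in\mathbb{N}}\frac{R_k}{Z^k},\qquad \theta(Z)=\sum_{k\in\mathbb{N}}\frac{\theta_k}{Z^k},\qquad (R_k,\theta_k)\in\mathbb{R}^2,\ R_0>0,\ -\tfrac{\pi}{2}<\theta_0<\tfrac{\pi}{2}. \] Moreover, the expansion $\sum_{k}R_k/Z^k$ is even in $Z$ (i.e. $R_k=0$ for $k$ odd) and the expansion $\sum_k\theta_k/Z^k$ is odd in $Z$ (i.e. $\theta_k=0$ for $k$ even).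
   Context: Let $n\ge 2$ be an integer. The axisymmetric capillary equation in $\mathbb{R}^{n+1}$, with the normalization $\kappa=n-1$, is the system $dr/dz=-\tan\theta$, $d\theta/dz=(n-1)\bigl(z/\cos\theta-1/r\bigr)$ with $r>0$, $\theta\in(-\pi/2,\pi/2)$. After the change of variables $(R,Z)=(zr,\,z^2/2)$ it becomes the system in $(R,\theta)$ as functions of $Z$ displayed in the claim. A formal solution means an expansion of the stated form which, when substituted into that system with $\tan\theta$ and $\cos\theta$ replaced by their power series in $\theta$, makes both equations hold at every order in $Z^{-1}$. *)

From Stdlib Require Import Reals Lra Arith.
From Coquelicot Require Import Coquelicot.
Open Scope R_scope.

(* A formal series  sum_k a_k / Z^k  is represented by its coefficient
   sequence  a : nat -> R  (coefficient of Z^{-k} is a k). *)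
Definition fseries := nat -> R.

Definition fmul (a b : fseries) : fseries :=
  fun k => sum_f_R0 (fun i => a i * b (k - i)%nat) k.

Definition fone : fseries := fun k => if Nat.eqb k 0 then 1 else 0.

Fixpoint fpow (a : fseries) (j : nat) : fseries :=
  match j with
  | O => fone
  | S j' => fmul a (fpow a j')
  end.

Definition fcenter (a : fseries) : fseries :=
  fun k => if Nat.eqb k 0 then 0 else a k.

(* Substitution of a formal series a (constant term a_0) into a function f,
   via the Taylor series of f at a_0:
     f(a) = sum_j f^(j)(a_0)/j! (a - a_0)^j.
   Since (a - a_0)^j only has terms of order >= j, the coefficient of Z^{-k}
   is a finite sum over j <= k. *)
Definition fcomp (f : R -> R) (a : fseries) : fseries :=
  fun k => sum_f_R0
    (fun j => Derive_n f j (a 0%nat) / INR (fact j) * fpow (fcenter a) j k) k.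

(* d/dZ of sum_k a_k Z^{-k} = sum_k (-k a_k) Z^{-k-1}:
   coefficient of Z^{-m} is -(m-1) a_{m-1} (and 0 for m = 0). *)
Definition fderivZ (a : fseries) : fseries :=
  fun m => match m with O => 0 | S j => - INR j * a j end.

(* multiplication by 1/Z *)
Definition fdivZ (a : fseries) : fseries :=
  fun m => match m with O => 0 | S j => a j end.

Definition formal_solution (n : nat) (Rs th : fseries) : Prop :=
  0 < Rs 0%nat /\ - (PI / 2) < th 0%nat < PI / 2 /\
  (forall m, fderivZ Rs m = - fcomp tan th m + fdivZ Rs m / 2) /\
  (forall m, fderivZ th m =
     (INR n - 1) * (fcomp (fun x => / cos x) th m - fcomp (fun x => / x) Rs m)).

From Stdlib Require Import Reals Arith Lra Lia FunctionalExtensionality.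
From Coquelicot Require Import Coquelicot.
Open Scope R_scope.

(* At order Z^0 the equations force th_0 = 0 and R_0 = 1.  At order Z^-(m+1)
   each equation is affine in the newest coefficients: since tan'(0) = 1, the
   first one determines th_(m+1) from lower coefficients, and since sec'(0) = 0
   and (1/x)'(1) = -1, the second one then determines R_(m+1).  This gives
   existence and uniqueness.  Since tan is odd and sec is even, the system is
   invariant under (R(Z), th(Z)) |-> (R(-Z), -th(-Z)); by uniqueness the
   solution is fixed by this symmetry, which is the parity statement. *)

Definition sec (x : R) : R := / cos x.

Inductive trig_expr : Type :=
  | TTan | TSec | TConst (c : R)
  | TAdd (e1 e2 : trig_expr) | TMul (e1 e2 : trig_expr).

Fixpoint trig_eval (e : trig_expr) (x : R) : R :=
  match e with
  | TTan => tan x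
  | TSec => sec x
  | TConst c => c
  | TAdd e1 e2 => trig_eval e1 x + trig_eval e2 x
  | TMul e1 e2 => trig_eval e1 x * trig_eval e2 x
  end.

Fixpoint trig_deriv (e : trig_expr) : trig_expr :=
  match e with
  | TTan => TAdd (TConst 1) (TMul TTan TTan)
  | TSec => TMul TSec TTan
  | TConst _ => TConst 0
  | TAdd e1 e2 => TAdd (trig_deriv e1) (trig_deriv e2)
  | TMul e1 e2 => TAdd (TMul (trig_deriv e1) e2) (TMul e1 (trig_deriv e2))
  end.

Lemma is_derive_trig_eval e x :
  cos x <> 0 -> is_derive (trig_eval e) x (trig_eval (trig_deriv e) x).
Proof.
  intros Hcos; induction e as [| | c | e1 IH1 e2 IH2 | e1 IH1 e2 IH2]; simpl.
  - replace (1 + tan x * tan x) with (tan x ^ 2 + 1) by ring.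
    exact (is_derive_tan x Hcos).
  - unfold sec, tan; auto_derive; [exact Hcos | field; exact Hcos].
  - exact (is_derive_const c x).
  - exact (is_derive_plus _ _ _ _ _ IH1 IH2).
  - exact (is_derive_mult _ _ _ _ _ IH1 IH2 Rmult_comm).
Qed.

Lemma Derive_n_trig_eval e k x : - (PI / 2) < x < PI / 2 ->
  Derive_n (trig_eval e) k x = trig_eval (Nat.iter k trig_deriv e) x.
Proof.
  revert x; induction k as [|k IHk]; intros x Hx; [reflexivity|].
  change (Derive (Derive_n (trig_eval e) k) x =
          trig_eval (trig_deriv (Nat.iter k trig_deriv e)) x).
  rewrite (Derive_ext_loc _ (trig_eval (Nat.iter k trig_deriv e))).
  - apply is_derive_unique, is_derive_trig_eval, Rgt_not_eq, cos_gt_0; lra.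
  - apply (locally_interval _ x (- (PI / 2)) (PI / 2)); simpl; try lra.
    intros y Hy1 Hy2; apply IHk; lra.
Qed.

(* [trig_parity e true] reads "e is odd", [trig_parity e false] "e is even". *)
Inductive trig_parity : trig_expr -> bool -> Prop :=
  | TP_tan : trig_parity TTan true
  | TP_sec : trig_parity TSec false
  | TP_const c : trig_parity (TConst c) false
  | TP_zero : trig_parity (TConst 0) true
  | TP_add e1 e2 b : trig_parity e1 b -> trig_parity e2 b -> trig_parity (TAdd e1 e2) b
  | TP_mul e1 e2 b1 b2 :
      trig_parity e1 b1 -> trig_parity e2 b2 -> trig_parity (TMul e1 e2) (xorb b1 b2).

Lemma trig_parity_deriv e b : trig_parity e b -> trig_parity (trig_deriv e) (negb b).
Proof.
  induction 1 as [| | | | | e1 e2 b1 b2 H1 IH1 H2 IH2]; simpl; try solve [constructor; auto].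
  - apply (TP_add _ _ false); [constructor | apply (TP_mul _ _ true true); constructor].
  - apply (TP_mul _ _ false true); constructor.
  - replace (negb (xorb b1 b2)) with (xorb (negb b1) b2) by (destruct b1, b2; reflexivity).
    constructor; [constructor; auto|].
    replace (xorb (negb b1) b2) with (xorb b1 (negb b2)) by (destruct b1, b2; reflexivity).
    constructor; auto.
Qed.

Lemma trig_parity_iter_deriv e b k :
  trig_parity e b -> trig_parity (Nat.iter k trig_deriv e) (xorb b (Nat.odd k)).
Proof.
  intros He; induction k as [|k IHk]; simpl Nat.iter.
  - rewrite Bool.xorb_false_r; exact He.
  - rewrite Nat.odd_succ, <- Nat.negb_odd.
    replace (xorb b (negb (Nat.odd k))) with (negb (xorb b (Nat.odd k)))
      by (destruct b, (Nat.odd k); reflexivity).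
    exact (trig_parity_deriv _ _ IHk).
Qed.

Lemma trig_eval_odd_0 e : trig_parity e true -> trig_eval e 0 = 0.
Proof.
  remember true as b eqn:Hb;
  induction 1 as [| | | | e1 e2 b' _ IH1 _ IH2 | e1 e2 b1 b2 _ IH1 _ IH2];
    simpl; try discriminate; auto.
  - exact tan_0.
  - rewrite IH1, IH2 by exact Hb; ring.
  - destruct b1, b2; try discriminate.
    + rewrite IH1 by reflexivity; ring.
    + rewrite IH2 by reflexivity; ring.
Qed.

Lemma Derive_n_tan_even_0 j : Nat.Even j -> Derive_n tan j 0 = 0.
Proof.
  intros Hj; change tan with (trig_eval TTan).
  rewrite Derive_n_trig_eval by (pose proof PI_RGT_0; lra).
  apply trig_eval_odd_0.
  replace true with (xorb true (Nat.odd j))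
    by (apply Nat.even_spec in Hj; rewrite <- Nat.negb_even, Hj; reflexivity).
  apply trig_parity_iter_deriv; constructor.
Qed.

Lemma Derive_n_sec_odd_0 j : Nat.Odd j -> Derive_n sec j 0 = 0.
Proof.
  intros Hj; change sec with (trig_eval TSec).
  rewrite Derive_n_trig_eval by (pose proof PI_RGT_0; lra).
  apply trig_eval_odd_0.
  replace true with (xorb false (Nat.odd j)) by (apply Nat.odd_spec in Hj; rewrite Hj; reflexivity).
  apply trig_parity_iter_deriv; constructor.
Qed.

Lemma Derive_n_tan_1_0 : Derive_n tan 1 0 = 1.
Proof.
  change tan with (trig_eval TTan).
  rewrite Derive_n_trig_eval by (pose proof PI_RGT_0; lra).
  simpl; rewrite tan_0; ring.
Qed.

Lemma Derive_n_Rinv_1_1 : Derive_n Rinv 1 1 = -1.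
Proof.
  change (Derive (fun x => / x) 1 = -1); apply is_derive_unique.
  auto_derive; [lra | field].
Qed.

Definition ftrunc (a : fseries) (m : nat) : fseries :=
  fun k => if (k <=? m)%nat then a k else 0.

Definition fextend (a : fseries) (m : nat) (v : R) : fseries :=
  fun k => if (k =? m)%nat then v else a k.

Definition fopp (a : fseries) : fseries := fun k => - a k.

(* The series in -Z. *)
Definition freflect (a : fseries) : fseries := fun k => (-1) ^ k * a k.

Lemma ftrunc_le a m k : (k <= m)%nat -> ftrunc a m k = a k.
Proof. intros Hk; unfold ftrunc; rewrite (proj2 (Nat.leb_le k m) Hk); reflexivity. Qed.

Lemma ftrunc_S a m : ftrunc a (S m) = fextend (ftrunc a m) (S m) (a (S m)).
Proof.
  apply functional_extensionality; intros k; unfold ftrunc, fextend.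
  destruct (Nat.eqb_spec k (S m)) as [->|Hk]; [now rewrite Nat.leb_refl|].
  destruct (Nat.leb_spec k (S m)), (Nat.leb_spec k m); reflexivity || lia.
Qed.

Lemma fextend_at a m v : fextend a m v m = v.
Proof. unfold fextend; now rewrite Nat.eqb_refl. Qed.

Lemma sum_f_R0_single g N :
  (1 <= N)%nat -> (forall j, j <> 1%nat -> g j = 0) -> sum_f_R0 g N = g 1%nat.
Proof.
  intros HN Hg; induction N as [|N IHN]; [lia|].
  destruct N as [|N]; simpl; [rewrite (Hg 0%nat) by lia; ring|].
  simpl in IHN; rewrite IHN, (Hg (S (S N))) by lia; ring.
Qed.

Lemma fmul_fone_r a k : fmul a fone k = a k.
Proof.
  unfold fmul; destruct k as [|k]; [unfold fone; simpl; ring|].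
  rewrite tech5, sum_eq_R0, Nat.sub_diag; [unfold fone; simpl; ring|].
  intros i Hi; unfold fone; replace (S k - i)%nat with (S (k - i)) by lia; simpl; ring.
Qed.

Lemma fpow_S_0 c j : c 0%nat = 0 -> fpow c (S j) 0%nat = 0.
Proof. intros Hc; simpl; unfold fmul; simpl; rewrite Hc; ring. Qed.

Lemma fpow_local a b K : (forall k, (k < K)%nat -> a k = b k) ->
  forall j k, (k < K)%nat -> fpow a j k = fpow b j k.
Proof.
  intros Hab j; induction j as [|j IHj]; intros k Hk; [reflexivity|].
  simpl; unfold fmul; apply sum_eq; intros i Hi.
  rewrite Hab, IHj by lia; reflexivity.
Qed.

(* Only the linear power sees the top coefficient of a series without constant term. *)
Lemma fpow_trunc_top c m j : c 0%nat = 0 -> j <> 1%nat ->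
  fpow c j (S m) = fpow (ftrunc c m) j (S m).
Proof.
  intros Hc0 Hj; destruct j as [|j]; [reflexivity|].
  assert (Hagree : forall k, (k < S m)%nat -> c k = ftrunc c m k)
    by (intros k Hk; rewrite ftrunc_le by lia; reflexivity).
  assert (Htc0 : ftrunc c m 0%nat = 0) by (rewrite ftrunc_le by lia; exact Hc0).
  simpl; unfold fmul; apply sum_eq; intros i Hi.
  destruct (Nat.eq_dec i 0) as [->|Hi0]; [rewrite Hc0, Htc0; ring|].
  destruct (Nat.eq_dec i (S m)) as [->|HiSm].
  - destruct j as [|j]; [lia|].
    rewrite Nat.sub_diag, !fpow_S_0 by assumption; ring.
  - rewrite (Hagree i), (fpow_local c (ftrunc c m) (S m) Hagree) by lia; reflexivity.
Qed.

Lemma fpow_scale b c a j k :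
  fpow (fun i => b * c ^ i * a i) j k = b ^ j * c ^ k * fpow a j k.
Proof.
  revert k; induction j as [|j IHj]; intros k.
  - simpl; unfold fone; destruct k; simpl; ring.
  - simpl fpow; unfold fmul.
    transitivity (sum_f_R0 (fun i => a i * fpow a j (k - i)%nat * (b ^ S j * c ^ k)) k).
    + apply sum_eq; intros i Hi; rewrite IHj.
      replace (c ^ k) with (c ^ i * c ^ (k - i)) by (rewrite <- pow_add; f_equal; lia).
      simpl; ring.
    + rewrite <- scal_sum; ring.
Qed.

Lemma fcomp_0 f a : fcomp f a 0%nat = f (a 0%nat).
Proof. unfold fcomp; simpl; unfold fone; simpl; field. Qed.

Lemma fcomp_top f a m :
  fcomp f a (S m) = fcomp f (ftrunc a m) (S m) + Derive_n f 1 (a 0%nat) * a (S m).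
Proof.
  assert (Hcenter : fcenter (ftrunc a m) = ftrunc (fcenter a) m)
    by (apply functional_extensionality; intros [|k]; reflexivity).
  unfold fcomp; rewrite Hcenter; change (ftrunc a m 0%nat) with (a 0%nat).
  enough (Hdiff : sum_f_R0 (fun j => Derive_n f j (a 0%nat) / INR (fact j) *
                    fpow (fcenter a) j (S m) - Derive_n f j (a 0%nat) / INR (fact j) *
                    fpow (ftrunc (fcenter a) m) j (S m)) (S m) =
                  Derive_n f 1 (a 0%nat) * a (S m)) by (rewrite minus_sum in Hdiff; lra).
  rewrite sum_f_R0_single by (lia || (intros j Hj; rewrite <- fpow_trunc_top by
    (reflexivity || assumption); ring)).
  simpl fpow; rewrite !fmul_fone_r; unfold ftrunc, fcenter.
  rewrite (proj2 (Nat.leb_gt (S m) m)) by lia; simpl; field.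
Qed.

Lemma fcomp_reflect f a m : fcomp f (freflect a) m = freflect (fcomp f a) m.
Proof.
  assert (Hcenter : fcenter (freflect a) = fun i => 1 * (-1) ^ i * fcenter a i)
    by (apply functional_extensionality; intros [|i]; unfold fcenter, freflect; simpl; ring).
  unfold fcomp; rewrite Hcenter; replace (freflect a 0%nat) with (a 0%nat)
    by (unfold freflect; simpl; ring).
  unfold freflect; rewrite scal_sum; apply sum_eq; intros j _.
  rewrite fpow_scale, pow1; ring.
Qed.

Lemma fcomp_opp f a s m : a 0%nat = 0 ->
  (forall j, (-1) ^ j * Derive_n f j 0 = s * Derive_n f j 0) ->
  fcomp f (fopp a) m = s * fcomp f a m.
Proof.
  intros Ha0 Hs.
  assert (Hcenter : fcenter (fopp a) = fun i => -1 * 1 ^ i * fcenter a i)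
    by (apply functional_extensionality; intros [|i]; unfold fcenter, fopp; rewrite pow1; simpl; ring).
  unfold fcomp; rewrite Hcenter; unfold fopp at 1; rewrite Ha0, Ropp_0.
  rewrite scal_sum; apply sum_eq; intros j _; rewrite fpow_scale, pow1.
  transitivity ((-1) ^ j * Derive_n f j 0 * / INR (fact j) * fpow (fcenter a) j m);
    [unfold Rdiv; ring | rewrite Hs; unfold Rdiv; ring].
Qed.

Lemma fcomp_opp_odd f a m : a 0%nat = 0 ->
  (forall j, Nat.Even j -> Derive_n f j 0 = 0) -> fcomp f (fopp a) m = - fcomp f a m.
Proof.
  intros Ha0 Hf; rewrite (fcomp_opp f a (-1)); [ring | exact Ha0|].
  intros j; destruct (Nat.Even_or_Odd j) as [Hj | [i ->]].
  - rewrite (Hf j Hj); ring.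
  - rewrite Nat.add_1_r, pow_1_odd; ring.
Qed.

Lemma fcomp_opp_even f a m : a 0%nat = 0 ->
  (forall j, Nat.Odd j -> Derive_n f j 0 = 0) -> fcomp f (fopp a) m = fcomp f a m.
Proof.
  intros Ha0 Hf; rewrite (fcomp_opp f a 1); [ring | exact Ha0|].
  intros j; destruct (Nat.Even_or_Odd j) as [[i ->] | Hj].
  - rewrite pow_1_even; ring.
  - rewrite (Hf j Hj); ring.
Qed.

Lemma fderivZ_reflect a m : fderivZ (freflect a) m = - freflect (fderivZ a) m.
Proof. destruct m; unfold freflect; simpl; ring. Qed.

Lemma fdivZ_reflect a m : fdivZ (freflect a) m = - freflect (fdivZ a) m.
Proof. destruct m; unfold freflect; simpl; ring. Qed.

Lemma fderivZ_opp a m : fderivZ (fopp a) m = - fderivZ a m.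
Proof. destruct m; unfold fopp; simpl; ring. Qed.

Lemma formal_solution_reflect n Rs th : formal_solution n Rs th -> th 0%nat = 0 ->
  formal_solution n (freflect Rs) (fopp (freflect th)).
Proof.
  intros (HR0 & Hth0 & Htan & Hsec) Hth00.
  assert (Hrth0 : freflect th 0%nat = 0) by (unfold freflect; simpl; rewrite Hth00; ring).
  pose proof PI_RGT_0.
  split; [unfold freflect; simpl; lra|].
  split; [unfold fopp; rewrite Hrth0; lra|].
  split; intros m.
  - rewrite fderivZ_reflect, fdivZ_reflect, (fcomp_opp_odd tan), fcomp_reflect;
      [| exact Hrth0 | exact Derive_n_tan_even_0].
    unfold freflect; rewrite Htan; field.
  - rewrite fderivZ_opp, fderivZ_reflect, (fcomp_opp_even (fun x => / cos x)), !fcomp_reflect;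
      [| exact Hrth0 | exact Derive_n_sec_odd_0].
    unfold freflect; rewrite Hsec; ring.
Qed.

Definition th_next (m : nat) (Rs th : fseries) : R :=
  (INR m + / 2) * Rs m - fcomp tan th (S m).

Lemma tan_equation_step Rs th m : th 0%nat = 0 ->
  (fderivZ Rs (S m) = - fcomp tan th (S m) + fdivZ Rs (S m) / 2 <->
   th (S m) = th_next m (ftrunc Rs m) (ftrunc th m)).
Proof.
  intros Hth0; unfold th_next.
  rewrite (fcomp_top tan th m), Hth0, Derive_n_tan_1_0, (ftrunc_le Rs m m) by lia.
  simpl fderivZ; simpl fdivZ; split; intros; lra.
Qed.

Section Recurrence.

Variable n : nat.
Hypothesis hn : (2 <= n)%nat.

Definition Rs_next (m : nat) (Rs th : fseries) : R :=
  fcomp Rinv Rs (S m) - fcomp sec th (S m) - INR m * th m / (INR n - 1).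

Lemma INR_n_gt_1 : 1 < INR n.
Proof. apply lt_1_INR; lia. Qed.

Lemma sec_equation_step Rs th m : Rs 0%nat = 1 -> th 0%nat = 0 ->
  (fderivZ th (S m) =
     (INR n - 1) * (fcomp (fun x => / cos x) th (S m) - fcomp (fun x => / x) Rs (S m)) <->
   Rs (S m) = Rs_next m (ftrunc Rs m) (ftrunc th m)).
Proof.
  intros HR0 Hth0; pose proof INR_n_gt_1 as Hn1.
  change (fcomp (fun x => / cos x)) with (fcomp sec).
  change (fcomp (fun x => / x)) with (fcomp Rinv).
  unfold Rs_next.
  rewrite (fcomp_top sec th m), (fcomp_top Rinv Rs m), Hth0, HR0, Derive_n_Rinv_1_1,
    Derive_n_sec_odd_0, (ftrunc_le th m m) by (lia || (exists 0%nat; reflexivity)).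
  assert (Hn0 : INR n - 1 <> 0) by lra.
  simpl fderivZ; split; intros Heq.
  - replace (INR m * th m) with (- (- INR m * th m)) by ring.
    rewrite Heq; field; exact Hn0.
  - rewrite Heq; field; exact Hn0.
Qed.

Definition coeff_recurrence (Rs th : fseries) : Prop :=
  Rs 0%nat = 1 /\ th 0%nat = 0 /\
  forall m, th (S m) = th_next m (ftrunc Rs m) (ftrunc th m) /\
            Rs (S m) = Rs_next m (ftrunc Rs m) (ftrunc th m).

Lemma formal_solution_iff_recurrence Rs th :
  formal_solution n Rs th <-> coeff_recurrence Rs th.
Proof.
  pose proof PI_RGT_0; pose proof INR_n_gt_1 as Hn1.
  split.
  - intros (HR0 & Hth0 & Htan & Hsec).
    assert (Hth00 : th 0%nat = 0).
    { specialize (Htan 0%nat); rewrite fcomp_0 in Htan; simpl in Htan.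
      apply tan_inj; [lra | lra | rewrite tan_0; lra]. }
    assert (HR00 : Rs 0%nat = 1).
    { specialize (Hsec 0%nat); rewrite !fcomp_0, Hth00, cos_0, Rinv_1 in Hsec; simpl in Hsec.
      assert (Hinv : / Rs 0%nat = 1) by nra.
      rewrite <- (Rinv_inv (Rs 0%nat)), Hinv; apply Rinv_1. }
    split; [exact HR00|]; split; [exact Hth00|]; intros m; split.
    + apply tan_equation_step; auto.
    + apply sec_equation_step; auto.
  - intros (HR0 & Hth0 & Hstep).
    split; [lra|]; split; [lra|]; split; intros [|m].
    + rewrite fcomp_0, Hth0, tan_0; simpl; lra.
    + apply tan_equation_step; [exact Hth0 | apply Hstep].
    + rewrite !fcomp_0, Hth0, HR0, cos_0, Rinv_1; simpl; ring.
    + apply sec_equation_step; [exact HR0 | exact Hth0 | apply Hstep].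
Qed.

Lemma coeff_recurrence_unique Rs th Rs' th' :
  coeff_recurrence Rs th -> coeff_recurrence Rs' th' -> Rs = Rs' /\ th = th'.
Proof.
  intros (HR0 & Hth0 & Hstep) (HR0' & Hth0' & Hstep').
  assert (Htrunc : forall m, ftrunc Rs m = ftrunc Rs' m /\ ftrunc th m = ftrunc th' m).
  { induction m as [|m [IHR IHth]].
    - split; apply functional_extensionality; intros [|k]; unfold ftrunc; simpl; congruence.
    - rewrite !ftrunc_S, (proj1 (Hstep m)), (proj2 (Hstep m)),
        (proj1 (Hstep' m)), (proj2 (Hstep' m)), IHR, IHth.
      split; reflexivity. }
  split; apply functional_extensionality; intros k.
  - rewrite <- (ftrunc_le Rs k k), <- (ftrunc_le Rs' k k) by apply Nat.le_refl.
    now rewrite (proj1 (Htrunc k)).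
  - rewrite <- (ftrunc_le th k k), <- (ftrunc_le th' k k) by apply Nat.le_refl.
    now rewrite (proj2 (Htrunc k)).
Qed.

Fixpoint coeff_prefix (m : nat) : fseries * fseries :=
  match m with
  | O => (fone, fun _ => 0)
  | S m' => let p := coeff_prefix m' in
      (fextend (fst p) (S m') (Rs_next m' (fst p) (snd p)),
       fextend (snd p) (S m') (th_next m' (fst p) (snd p)))
  end.

Definition Rs_sol : fseries := fun k => fst (coeff_prefix k) k.
Definition th_sol : fseries := fun k => snd (coeff_prefix k) k.

Lemma Rs_sol_S m :
  Rs_sol (S m) = Rs_next m (fst (coeff_prefix m)) (snd (coeff_prefix m)).
Proof. apply fextend_at. Qed.

Lemma th_sol_S m :
  th_sol (S m) = th_next m (fst (coeff_prefix m)) (snd (coeff_prefix m)).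
Proof. apply fextend_at. Qed.

Lemma coeff_prefix_trunc m : coeff_prefix m = (ftrunc Rs_sol m, ftrunc th_sol m).
Proof.
  induction m as [|m IH].
  - cbn [coeff_prefix]; f_equal; apply functional_extensionality; intros [|k]; reflexivity.
  - rewrite !ftrunc_S, Rs_sol_S, th_sol_S; simpl coeff_prefix; rewrite IH; reflexivity.
Qed.

Lemma coeff_recurrence_sol : coeff_recurrence Rs_sol th_sol.
Proof.
  split; [reflexivity|]; split; [reflexivity|]; intros m.
  rewrite Rs_sol_S, th_sol_S, coeff_prefix_trunc; split; reflexivity.
Qed.

End Recurrence.

Theorem proposition1 (n : nat) (hn : (2 <= n)%nat) :
  exists Rs th : fseries,
    formal_solution n Rs th /\
    (forall Rs' th' : fseries, formal_solution n Rs' th' -> Rs' = Rs /\ th' = th) /\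
    (forall k, Nat.Odd k -> Rs k = 0) /\
    (forall k, Nat.Even k -> th k = 0).
Proof.
  pose proof (formal_solution_iff_recurrence n hn) as Hiff.
  assert (Hsol : formal_solution n (Rs_sol n) (th_sol n))
    by apply Hiff, coeff_recurrence_sol.
  assert (Huniq : forall Rs th, formal_solution n Rs th -> Rs = Rs_sol n /\ th = th_sol n)
    by (intros Rs th Hs; apply (coeff_recurrence_unique n);
        [apply Hiff, Hs | apply coeff_recurrence_sol]).
  destruct (Huniq _ _ (formal_solution_reflect n _ _ Hsol eq_refl)) as [HR Hth].
  exists (Rs_sol n), (th_sol n); split; [exact Hsol|]; split; [exact Huniq|]; split.
  - intros k [i ->]; pose proof (equal_f HR (2 * i + 1)%nat) as E.
    unfold freflect in E; rewrite Nat.add_1_r in E |- *; rewrite pow_1_odd in E; lra.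
  - intros k [i ->]; pose proof (equal_f Hth (2 * i)%nat) as E.
    unfold fopp, freflect in E; rewrite pow_1_even in E; lra.
Qed.
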